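(* Let $D_K$ be a relative $K$-entropy satisfying Properties (a) and (b) below, and let $H_K$ be the associated conditional entropy, defined by one of the two forms below. Let $V_A:\mathcal{H}_A\to\mathcal{H}_{A'}$ and $V_B:\mathcal{H}_B\to\mathcal{H}_{B'}$ be isometries, $\rho_{AB}$ a density operator, and $\rho_{A'B'}:=(V_A\otimes V_B)\rho_{AB}(V_A^\dagger\otimes V_B^\dagger)$. Then $H_K(A|B)=H_K(A'|B')$, where the left side is evaluated on $\rho_{AB}$ and the right side on $\rho_{A'B'}$.
   Context: All Hilbert spaces are finite-dimensional. A relative $K$-entropy $D_K$ assigns to every pair $(S,T)$ of positive semidefinite operators on a common Hilbert space an extended real number $D_K(S\|T)$. Properties: (a) for every trace-preserving completely positive map $\mathcal{E}$ (possibly between different spaces), $D_K(\mathcal{E}(S)\|\mathcal{E}(T))\le D_K(S\|T)$; (b) for positive semidefinite $S,T$ on $\mathcal{H}$ and $T'$ on $\mathcal{H}'$, $D_K(S\oplus 0\,\|\,T\oplus T')=D_K(S\|T)$. The conditional $K$-entropy of a density operator $\rho_{AB}$ is either $H_K(A|B)=-D_K(\rho_{AB}\|\mathbb{1}_A\otimes\rho_B)$ for all $\rho_{AB}$, or $H_K(A|B)=\max_{\sigma_B}[-D_K(\rho_{AB}\|\mathbb{1}_A\otimes\sigma_B)]$ for all $\rho_{AB}$, maximum over density operators $\sigma_B$. *)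

From HB Require Import structures.
From mathcomp Require Import all_boot all_order all_algebra.
From mathcomp Require Import complex mxtens.
From mathcomp Require Import reals constructive_ereal.

Set Implicit Arguments.
Unset Strict Implicit.
Unset Printing Implicit Defensive.

Import Order.TTheory GRing.Theory Num.Theory.
Local Open Scope ring_scope.

Section QDefs.
Variable R : realType.
Local Notation C := R[i].

Definition adjmx {m n : nat} (A : 'M[C]_(m, n)) : 'M[C]_(n, m) :=
  (map_mx Num.conj A)^T.

Definition psd {n : nat} (A : 'M[C]_n) : Prop :=
  adjmx A = A /\ forall v : 'cV[C]_n, 0 <= (adjmx v *m A *m v) 0 0.

Definition density {n : nat} (A : 'M[C]_n) : Prop := psd A /\ \tr A = 1.

Definition is_isometry {m n : nat} (V : 'M[C]_(m, n)) : Prop :=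
  adjmx V *m V = 1%:M.

Definition blockmx {k n : nat} (X : 'M[C]_(k * n)) (i j : 'I_k) : 'M[C]_n :=
  \matrix_(a, b) X (mxtens_index (i, a)) (mxtens_index (j, b)).

(* id_k (x) E *)
Definition ampl {n m : nat} (k : nat) (E : 'M[C]_n -> 'M[C]_m)
  (X : 'M[C]_(k * n)) : 'M[C]_(k * m) :=
  \sum_(i < k) \sum_(j < k) (delta_mx i j *t E (blockmx X i j)).

Definition linear_map {n m : nat} (E : 'M[C]_n -> 'M[C]_m) : Prop :=
  forall (a : C) (X Y : 'M[C]_n), E (a *: X + Y) = a *: E X + E Y.

Definition completely_positive {n m : nat} (E : 'M[C]_n -> 'M[C]_m) : Prop :=
  linear_map E /\ forall (k : nat) (X : 'M[C]_(k * n)), psd X -> psd (@ampl n m k E X).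

Definition trace_preserving {n m : nat} (E : 'M[C]_n -> 'M[C]_m) : Prop :=
  forall X : 'M[C]_n, \tr (E X) = \tr X.

Definition rel_ent := forall n : nat, 'M[C]_n -> 'M[C]_n -> \bar R.

Definition prop_a (D : rel_ent) : Prop :=
  forall (n m : nat) (E : 'M[C]_n -> 'M[C]_m), completely_positive E ->
    trace_preserving E ->
    forall S T : 'M[C]_n, psd S -> psd T ->
      (D m (E S) (E T) <= D n S T)%E.

Definition prop_b (D : rel_ent) : Prop :=
  forall (n n' : nat) (S T : 'M[C]_n) (T' : 'M[C]_n'),
    psd S -> psd T -> psd T' ->
    D (n + n')%N (block_mx S 0 0 0) (block_mx T 0 0 T') = D n S T.

Definition ptrA {dA dB : nat} (X : 'M[C]_(dA * dB)) : 'M[C]_dB :=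
  \matrix_(j, j') \sum_(i < dA) X (mxtens_index (i, j)) (mxtens_index (i, j')).

Definition Hcond1 (D : rel_ent) (dA dB : nat) (rho : 'M[C]_(dA * dB)) : \bar R :=
  (- D (dA * dB)%N rho (1%:M *t ptrA rho))%E.

Definition Hcond_sigma (D : rel_ent) (dA dB : nat) (rho : 'M[C]_(dA * dB))
  (sigma : 'M[C]_dB) : \bar R :=
  (- D (dA * dB)%N rho ((1%:M : 'M[C]_dA) *t sigma))%E.

Definition is_cond_entropy (D : rel_ent)
  (H : forall dA dB : nat, 'M[C]_(dA * dB) -> \bar R) : Prop :=
  (forall (dA dB : nat) (rho : 'M[C]_(dA * dB)), density rho ->
      H dA dB rho = Hcond1 D rho)
  \/
  (forall (dA dB : nat) (rho : 'M[C]_(dA * dB)), density rho ->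
      (exists sigma : 'M[C]_dB, density sigma /\ H dA dB rho = Hcond_sigma D rho sigma)
      /\ (forall sigma : 'M[C]_dB, density sigma ->
            (Hcond_sigma D rho sigma <= H dA dB rho)%E)).

End QDefs.

From HB Require Import structures.
From mathcomp Require Import all_boot all_order all_algebra.
From mathcomp Require Import complex mxtens.
From mathcomp Require Import reals constructive_ereal.
From mathcomp Require Import ring.

(* Write W := V_A (x) V_B and, for an isometry V, P := 1 - V V^*.  Two
   Kraus maps tie D to isometries: the embedding S (+) Q |-> V S V^* + Q
   (Kraus operators [V 0] and [0 1]) and the compression
   Y |-> V^* Y V (+) P Y P.  With (a) and (b) they give
   D(V S V^*, V T V^* + Q) = D(S, T) when Q V = 0, and
   D(S, V^* Y V) <= D(V S V^*, Y).  Since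
   1 (x) V_B s V_B^* = W (1 (x) s) W^* + P_A (x) V_B s V_B^*, every term
   -D(rho || 1 (x) s) reappears on the primed side with s replaced by
   V_B s V_B^*; as the partial trace of W rho W^* is V_B rho_B V_B^*, this
   settles the first form and gives H(A|B) <= H(A'|B') for the second.
   Conversely a state s' on B' compresses to V_B^* s' V_B, which a positive
   term completes to a state on B; adding a positive operator to the second
   argument can only decrease D (the embedding inequality with V = 1). *)

Set Implicit Arguments.
Unset Strict Implicit.
Unset Printing Implicit Defensive.

Import Order.TTheory GRing.Theory Num.Theory.
Local Open Scope ring_scope.

Section ConditionalEntropyIsometry.
Variable R : realType.
Local Notation C := R[i].

Lemma adjmxE m n (A : 'M[C]_(m, n)) i j : adjmx A i j = (A j i)^*.
Proof. by rewrite !mxE. Qed.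

Lemma adjmxK m n (A : 'M[C]_(m, n)) : adjmx (adjmx A) = A.
Proof. by apply/matrixP => i j; rewrite !adjmxE conjCK. Qed.

Lemma adjmxM m n p (A : 'M[C]_(m, n)) (B : 'M[C]_(n, p)) :
  adjmx (A *m B) = adjmx B *m adjmx A.
Proof.
apply/matrixP => i j; rewrite adjmxE !mxE rmorph_sum; apply: eq_bigr => k _.
by rewrite rmorphM mulrC !adjmxE.
Qed.

Lemma adjmxD m n (A B : 'M[C]_(m, n)) : adjmx (A + B) = adjmx A + adjmx B.
Proof. by apply/matrixP => i j; rewrite !mxE rmorphD. Qed.

Lemma adjmxB m n (A B : 'M[C]_(m, n)) : adjmx (A - B) = adjmx A - adjmx B.
Proof. by apply/matrixP => i j; rewrite !mxE rmorphB. Qed.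

Lemma adjmx0 m n : adjmx (0 : 'M[C]_(m, n)) = 0.
Proof. by apply/matrixP => i j; rewrite !mxE rmorph0. Qed.

Lemma adjmx1 n : adjmx (1%:M : 'M[C]_n) = 1%:M.
Proof. by apply/matrixP => i j; rewrite !mxE rmorph_nat eq_sym. Qed.

Lemma adjmx_delta m n (i : 'I_m) (j : 'I_n) :
  adjmx (delta_mx i j : 'M[C]_(m, n)) = delta_mx j i.
Proof. by apply/matrixP => a b; rewrite !mxE rmorph_nat andbC. Qed.

Lemma adjmx_tens m n p q (A : 'M[C]_(m, n)) (B : 'M[C]_(p, q)) :
  adjmx (A *t B) = adjmx A *t adjmx B.
Proof. by apply/matrixP => i j; rewrite !mxE rmorphM. Qed.

Lemma adjmx_col m1 m2 n (A : 'M[C]_(m1, n)) (B : 'M[C]_(m2, n)) :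
  adjmx (col_mx A B) = row_mx (adjmx A) (adjmx B).
Proof. by rewrite /adjmx map_col_mx tr_col_mx. Qed.

Lemma adjmx_row m n1 n2 (A : 'M[C]_(m, n1)) (B : 'M[C]_(m, n2)) :
  adjmx (row_mx A B) = col_mx (adjmx A) (adjmx B).
Proof. by rewrite /adjmx map_row_mx tr_row_mx. Qed.

Lemma tensmxDl m n p q (A A' : 'M[C]_(m, n)) (B : 'M[C]_(p, q)) :
  (A + A') *t B = A *t B + A' *t B.
Proof. by apply/matrixP => a b; rewrite !mxE mulrDl. Qed.

Lemma tensmxDr m n p q (A : 'M[C]_(m, n)) (B B' : 'M[C]_(p, q)) :
  A *t (B + B') = A *t B + A *t B'.
Proof. by apply/matrixP => a b; rewrite !mxE mulrDr. Qed.

Lemma tensmx_sumr m n p q I (r : seq I) (P : pred I) (A : 'M[C]_(m, n))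
    (F : I -> 'M[C]_(p, q)) :
  A *t (\sum_(i <- r | P i) F i) = \sum_(i <- r | P i) A *t F i.
Proof.
apply/matrixP => a b; rewrite summxE !mxE summxE mulr_sumr.
by apply: eq_bigr => i _; rewrite !mxE.
Qed.

Lemma tensmx_1E m n (s : 'M[C]_n) i j a b :
  ((1%:M : 'M[C]_m) *t s) (mxtens_index (i, a)) (mxtens_index (j, b)) =
  (i == j)%:R * s a b.
Proof. by rewrite tensmxE mxE. Qed.

Lemma tensmx11 m n : (1%:M : 'M[C]_m) *t (1%:M : 'M[C]_n) = 1%:M.
Proof.
apply/matrixP => r c.
case: (mxtens_indexP r) => i a; case: (mxtens_indexP c) => j b.
rewrite tensmx_1E !mxE (inj_eq (can_inj (@mxtens_indexK _ _))) xpair_eqE.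
by case: (i == j); rewrite /= ?mul1r ?mul0r.
Qed.

Lemma sum_ord_supp1 n (G : 'I_n -> C) i : (forall j, j != i -> G j = 0) ->
  \sum_j G j = G i.
Proof. by move=> h; rewrite (bigD1 i) //= big1 ?addr0 // => j /h. Qed.

Lemma sum_ord_delta n (F : 'I_n -> C) k : \sum_l (l == k)%:R * F l = F k.
Proof.
by rewrite (sum_ord_supp1 (i := k)) ?eqxx ?mul1r // => l /negbTE ->; rewrite mul0r.
Qed.

Lemma sum_mxtens_index m n (F : 'I_(m * n) -> C) :
  \sum_r F r = \sum_(k < m) \sum_(a < n) F (mxtens_index (k, a)).
Proof.
rewrite pair_big /=; apply: (reindex (fun p => mxtens_index (p.1, p.2))) => /=.
exists (@mxtens_unindex m n) => x _; last by rewrite -surjective_pairing mxtens_unindexK.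
by rewrite mxtens_indexK -surjective_pairing.
Qed.

Lemma mulmx3E m n p q (M : 'M[C]_(m, n)) (X : 'M[C]_(n, p)) (N : 'M[C]_(p, q)) a b :
  (M *m X *m N) a b = \sum_r \sum_s M a r * X r s * N s b.
Proof.
rewrite mxE; under eq_bigr do rewrite mxE mulr_suml.
by rewrite exchange_big.
Qed.

Lemma blockmx_sum k p (X : 'M[C]_(k * p)) :
  \sum_(i < k) \sum_(j < k) (delta_mx i j *t blockmx X i j) = X.
Proof.
apply/matrixP => r c.
case: (mxtens_indexP r) => i0 a; case: (mxtens_indexP c) => j0 b.
rewrite summxE (bigD1 i0) //= [X in _ + X]big1; last first.
  move=> i /negbTE hi; rewrite summxE big1 // => j _.
  by rewrite tensmxE !mxE eq_sym hi mul0r.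
rewrite summxE (bigD1 j0) //= big1; last first.
  by move=> j /negbTE hj; rewrite tensmxE !mxE eqxx /= eq_sym hj mul0r.
by rewrite !addr0 tensmxE !mxE !eqxx mul1r.
Qed.

Lemma isometry_compl n n' (V : 'M[C]_(n', n)) : adjmx V *m V = 1%:M ->
  let P := 1%:M - V *m adjmx V in
  [/\ adjmx P = P, P *m P = P, P *m V = 0 & V *m adjmx V + P = 1%:M].
Proof.
move=> hV P; split.
- by rewrite /P adjmxB adjmx1 adjmxM adjmxK.
- rewrite {1}/P mulmxBl mul1mx /P mulmxBr mulmx1 !mulmxA -(mulmxA V) hV.
  by rewrite mulmx1 subrr subr0.
- by rewrite /P mulmxBl mul1mx -mulmxA hV mulmx1 subrr.
- by rewrite /P addrC subrK.
Qed.

Lemma isometry_tens m m' n n' (A : 'M[C]_(m', m)) (B : 'M[C]_(n', n)) :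
  adjmx A *m A = 1%:M -> adjmx B *m B = 1%:M ->
  adjmx (A *t B) *m (A *t B) = 1%:M.
Proof. by move=> hA hB; rewrite adjmx_tens tensmx_mul hA hB tensmx11. Qed.

Lemma psd0 n : psd (0 : 'M[C]_n).
Proof. by split; [rewrite adjmx0 | move=> v; rewrite mulmx0 mul0mx mxE]. Qed.

Lemma psdD n (A B : 'M[C]_n) : psd A -> psd B -> psd (A + B).
Proof.
move=> [hA qA] [hB qB]; split; first by rewrite adjmxD hA hB.
by move=> v; rewrite mulmxDr mulmxDl mxE addr_ge0.
Qed.

Lemma psd_sum n I (r : seq I) (P : pred I) (F : I -> 'M[C]_n) :
  (forall i, P i -> psd (F i)) -> psd (\sum_(i <- r | P i) F i).
Proof.
move=> h; apply: (big_ind (fun A : 'M[C]_n => psd A)) => //.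
  exact: psd0.
exact: psdD.
Qed.

Lemma psd_conj m n (M : 'M[C]_(m, n)) (X : 'M[C]_n) :
  psd X -> psd (M *m X *m adjmx M).
Proof.
move=> [hX qX]; split; first by rewrite !adjmxM adjmxK hX mulmxA.
by move=> v; have := qX (adjmx M *m v); rewrite adjmxM adjmxK !mulmxA.
Qed.

Lemma psd_conj_adj m n (M : 'M[C]_(m, n)) (X : 'M[C]_m) :
  psd X -> psd (adjmx M *m X *m M).
Proof. by rewrite -{2}(adjmxK M); exact: psd_conj. Qed.

Lemma psd_block_diag n1 n2 (A : 'M[C]_n1) (B : 'M[C]_n2) :
  psd A -> psd B -> psd (block_mx A 0 0 B).
Proof.
move=> hA hB.
have -> : block_mx A 0 0 B = col_mx 1%:M 0 *m A *m adjmx (col_mx 1%:M 0)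
                           + col_mx 0 1%:M *m B *m adjmx (col_mx 0 1%:M).
  rewrite !adjmx_col !adjmx1 !adjmx0 [col_mx _ _ *m A]mul_col_mx.
  rewrite [col_mx _ _ *m B]mul_col_mx !mul_col_row add_block_mx.
  by rewrite !mul1mx !mul0mx !mulmx1 !mulmx0 !addr0 !add0r.
by apply: psdD; apply: psd_conj.
Qed.

Lemma psd_1tensmx k n (s : 'M[C]_n) : psd s -> psd ((1%:M : 'M[C]_k) *t s).
Proof.
move=> [hs qs]; split; first by rewrite adjmx_tens adjmx1 hs.
move=> v; rewrite mulmx3E sum_mxtens_index.
pose vi i := \col_c v (mxtens_index (i, c)) 0.
have slice i a : \sum_r adjmx v 0 (mxtens_index (i, a)) *
    (1%:M *t s) (mxtens_index (i, a)) r * v r 0 =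
  \sum_b adjmx (vi i) 0 a * s a b * vi i b 0.
  rewrite sum_mxtens_index (sum_ord_supp1 (i := i)).
    by apply: eq_bigr => b _; rewrite tensmx_1E eqxx mul1r !mxE.
  move=> j hj; apply: big1 => b _.
  by rewrite tensmx_1E eq_sym (negbTE hj) !(mul0r, mulr0).
under eq_bigr => i _ do under eq_bigr => a _ do rewrite slice.
by apply: sumr_ge0 => i _; have := qs (vi i); rewrite mulmx3E.
Qed.

Lemma psd_ptrA dA dB (X : 'M[C]_(dA * dB)) : psd X -> psd (ptrA X).
Proof.
move=> hX.
pose E (i : 'I_dA) : 'M[C]_(dB, dA * dB) :=
  \matrix_(j, r) (r == mxtens_index (i, j))%:R.
have -> : ptrA X = \sum_i E i *m X *m adjmx (E i).
  apply/matrixP => j j'; rewrite !mxE summxE; apply: eq_bigr => i _.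
  rewrite mulmx3E.
  under eq_bigr => r _ do under eq_bigr => s _ do rewrite adjmxE !mxE -mulrA.
  under eq_bigr => r _ do rewrite -mulr_sumr.
  rewrite sum_ord_delta.
  under eq_bigr => s _ do rewrite rmorph_nat mulrC.
  by rewrite sum_ord_delta.
by apply: psd_sum => i _; apply: psd_conj.
Qed.

Lemma ptrA_conj dA dB dA' dB' (A : 'M[C]_(dA', dA)) (B : 'M[C]_(dB', dB))
    (X : 'M[C]_(dA * dB)) : adjmx A *m A = 1%:M ->
  ptrA (A *t B *m X *m adjmx (A *t B)) = B *m ptrA X *m adjmx B.
Proof.
move=> hA; apply/matrixP => j j'; rewrite [LHS]mxE [RHS]mulmx3E.
under eq_bigr => i _ do rewrite mulmx3E sum_mxtens_index.
under eq_bigr => i _ do under eq_bigr => k _ do under eq_bigr => a _ do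
  rewrite sum_mxtens_index.
rewrite exchange_big /=.
under eq_bigr => k _ do rewrite exchange_big /=.
under eq_bigr => k _ do under eq_bigr => a _ do rewrite exchange_big /=.
under eq_bigr => k _ do under eq_bigr => a _ do under eq_bigr => l _ do
  rewrite exchange_big /=.
(* summing over i contracts the A-factors into (A^* A) l k = (l == k) *)
have contract k a l b :
  \sum_(i < dA') (A *t B) (mxtens_index (i, j)) (mxtens_index (k, a)) *
      X (mxtens_index (k, a)) (mxtens_index (l, b)) *
      adjmx (A *t B) (mxtens_index (l, b)) (mxtens_index (i, j')) =
  (l == k)%:R * (B j a * X (mxtens_index (k, a)) (mxtens_index (l, b))
      * (B j' b)^*).
  move/matrixP: hA => /(_ l k); rewrite !mxE => <-.
  rewrite mulr_suml; apply: eq_bigr => i _.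
  rewrite adjmxE !tensmxE !mxE rmorphM; ring.
under eq_bigr => k _ do under eq_bigr => a _ do under eq_bigr => l _ do
  under eq_bigr => b _ do rewrite contract.
under eq_bigr => k _ do under eq_bigr => a _ do under eq_bigr => l _ do
  rewrite -mulr_sumr.
under eq_bigr => k _ do under eq_bigr => a _ do rewrite sum_ord_delta.
rewrite exchange_big /=; under eq_bigr => a _ do rewrite exchange_big /=.
apply: eq_bigr => a _; apply: eq_bigr => b _.
by rewrite !mxE mulr_sumr mulr_suml.
Qed.

Definition kraus m p q (K : 'I_m -> 'M[C]_(q, p)) (X : 'M[C]_p) : 'M[C]_q :=
  \sum_l K l *m X *m adjmx (K l).

Lemma ampl_kraus k m p q (K : 'I_m -> 'M[C]_(q, p)) (X : 'M[C]_(k * p)) :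
  @ampl _ p q k (kraus K) X = \sum_l (1%:M *t K l) *m X *m adjmx (1%:M *t K l).
Proof.
rewrite /ampl /kraus.
under eq_bigr do under eq_bigr do rewrite tensmx_sumr.
rewrite exchange_big /=; under eq_bigr do rewrite exchange_big /=.
rewrite exchange_big /=; apply: eq_bigr => l _.
set Y := RHS; rewrite /Y -[in RHS](blockmx_sum X) exchange_big /=.
rewrite mulmx_sumr mulmx_suml.
apply: eq_bigr => i _; rewrite mulmx_sumr mulmx_suml; apply: eq_bigr => j _.
by rewrite adjmx_tens adjmx1 !tensmx_mul mul1mx mulmx1.
Qed.

Lemma kraus_cptp m p q (K : 'I_m -> 'M[C]_(q, p)) :
  \sum_l adjmx (K l) *m K l = 1%:M ->
  completely_positive (kraus K) /\ trace_preserving (kraus K).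
Proof.
move=> hK; split; first split.
- move=> a X Y; rewrite /kraus scaler_sumr -big_split /=; apply: eq_bigr => l _.
  by rewrite mulmxDr mulmxDl -scalemxAr -scalemxAl.
- by move=> k X hX; rewrite ampl_kraus; apply: psd_sum => l _; exact: psd_conj.
- move=> X; rewrite -[in RHS](mul1mx X) -hK mulmx_suml /kraus !raddf_sum.
  by apply: eq_bigr => l _; rewrite /= mxtrace_mulC mulmxA.
Qed.

Lemma cptp_eq n m (E F : 'M[C]_n -> 'M[C]_m) : E =1 F ->
  completely_positive E /\ trace_preserving E ->
  completely_positive F /\ trace_preserving F.
Proof.
move=> eEF [[linE cpE] tpE]; split; first split.
- by move=> a X Y; rewrite -!eEF linE.
- move=> k X hX; have := cpE k X hX; rewrite /ampl.
  by under eq_bigr do under eq_bigr do rewrite eEF.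
- by move=> X; rewrite -eEF tpE.
Qed.

Lemma kraus2_cptp p q (K0 K1 : 'M[C]_(q, p)) :
  adjmx K0 *m K0 + adjmx K1 *m K1 = 1%:M ->
  let E X := K0 *m X *m adjmx K0 + K1 *m X *m adjmx K1 in
  completely_positive E /\ trace_preserving E.
Proof.
move=> h E; apply: (@cptp_eq _ _ (kraus (fun l : 'I_2 => if l == ord0 then K0 else K1))).
  by move=> X; rewrite /kraus big_ord_recl big_ord1.
by apply: kraus_cptp; rewrite big_ord_recl big_ord1.
Qed.

Section DataProcessing.
Variable D : rel_ent R.
Arguments D : clear implicits.
Hypothesis Ha : prop_a D.
Hypothesis Hb : prop_b D.

Lemma D_embed_le n n' (V : 'M[C]_(n', n)) (S T : 'M[C]_n) (Q : 'M[C]_n') :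
  adjmx V *m V = 1%:M -> psd S -> psd T -> psd Q ->
  (D n' (V *m S *m adjmx V) (V *m T *m adjmx V + Q)%R <= D n S T)%E.
Proof.
move=> hV hS hT hQ; rewrite -(Hb hS hT hQ).
have hK : adjmx (row_mx V 0) *m row_mx V 0
          + adjmx (row_mx 0 1%:M) *m row_mx 0 (1%:M : 'M[C]_n') = 1%:M.
  rewrite !adjmx_row !adjmx0 adjmx1 !mul_col_row hV add_block_mx.
  by rewrite !mul0mx !mulmx0 !mul1mx !addr0 !add0r -scalar_mx_block.
have [cp tp] := kraus2_cptp hK.
have := Ha cp tp (psd_block_diag hS (@psd0 _)) (psd_block_diag hT hQ).
by rewrite !adjmx_row !adjmx0 adjmx1 !mul_row_block !mul_row_col !mul0mx
  !mul1mx !mulmx0 !mulmx1 !addr0 !add0r.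
Qed.

Lemma D_addr_le n (S T T' : 'M[C]_n) : psd S -> psd T -> psd T' ->
  (D n S (T + T')%R <= D n S T)%E.
Proof.
move=> hS hT hT'.
have := D_embed_le (V := 1%:M) _ hS hT hT'.
by rewrite adjmx1 !mulmx1 !mul1mx; apply.
Qed.

Lemma D_compress_le n n' (V : 'M[C]_(n', n)) (S : 'M[C]_n) (Y : 'M[C]_n') :
  adjmx V *m V = 1%:M -> psd S -> psd Y ->
  (D n S (adjmx V *m Y *m V) <= D n' (V *m S *m adjmx V) Y)%E.
Proof.
move=> hV hS hY.
have [hPh hPP hPV hPs] := isometry_compl hV.
set P := 1%:M - V *m adjmx V in hPh hPP hPV hPs.
have hK : adjmx (col_mx (adjmx V) (0 : 'M[C]_(n', n'))) *m col_mx (adjmx V) 0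
          + adjmx (col_mx 0 P) *m col_mx (0 : 'M[C]_(n, n')) P = 1%:M.
  by rewrite !adjmx_col adjmxK !adjmx0 hPh !mul_row_col hPP !mul0mx !addr0 add0r hPs.
have [cp tp] := kraus2_cptp hK.
have := Ha cp tp (psd_conj V hS) hY.
have out X : col_mx (adjmx V) 0 *m X *m adjmx (col_mx (adjmx V) 0)
             + col_mx 0 P *m X *m adjmx (col_mx 0 P) =
             block_mx (adjmx V *m X *m V) 0 0 (P *m X *m P).
  rewrite !adjmx_col !adjmx0 adjmxK hPh [col_mx _ 0 *m X]mul_col_mx.
  by rewrite [col_mx 0 P *m X]mul_col_mx !mul_col_row !mul0mx !mulmx0
    add_block_mx !addr0 !add0r.
rewrite !out !mulmxA hPV !mul0mx -!mulmxA hV mulmx1 !mulmxA hV mul1mx.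
have hPY : psd (P *m Y *m P) by rewrite -{2}hPh; exact: psd_conj.
by rewrite (Hb hS (psd_conj_adj V hY) hPY).
Qed.

Lemma D_embed n n' (V : 'M[C]_(n', n)) (S T : 'M[C]_n) (Q : 'M[C]_n') :
  adjmx V *m V = 1%:M -> psd S -> psd T -> psd Q -> Q *m V = 0 ->
  D n' (V *m S *m adjmx V) (V *m T *m adjmx V + Q) = D n S T.
Proof.
move=> hV hS hT hQ hQV; apply/le_anti/andP; split; first exact: D_embed_le.
have compress : adjmx V *m (V *m T *m adjmx V + Q) *m V = T.
  rewrite mulmxDr mulmxDl -(mulmxA _ Q) hQV mulmx0 addr0.
  by rewrite !mulmxA hV mul1mx -mulmxA hV mulmx1.
by have := D_compress_le hV hS (psdD (psd_conj V hT) hQ); rewrite compress.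
Qed.

Section Isometries.
Variables (dA dB dA' dB' : nat) (VA : 'M[C]_(dA', dA)) (VB : 'M[C]_(dB', dB)).
Hypothesis hVA : adjmx VA *m VA = 1%:M.
Hypothesis hVB : adjmx VB *m VB = 1%:M.
Local Notation W := (VA *t VB).

Lemma D_tens_conj (rho : 'M[C]_(dA * dB)) (s : 'M[C]_dB) : psd rho -> psd s ->
  D (dA' * dB')%N (W *m rho *m adjmx W) (1%:M *t (VB *m s *m adjmx VB)) =
  D (dA * dB)%N rho (1%:M *t s).
Proof.
move=> hrho hs.
have [hPh hPP hPV hPs] := isometry_compl hVA.
set PA := 1%:M - VA *m adjmx VA in hPh hPP hPV hPs.
have id_decomp : (1%:M : 'M[C]_dA') *t (VB *m s *m adjmx VB) =
   W *m (1%:M *t s) *m adjmx W + PA *t (VB *m s *m adjmx VB).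
  by rewrite adjmx_tens !tensmx_mul mulmx1 -tensmxDl hPs.
have hQ : psd (PA *t (VB *m s *m adjmx VB)).
  have -> : PA *t (VB *m s *m adjmx VB) =
            (PA *t VB) *m (1%:M *t s) *m adjmx (PA *t VB).
    by rewrite adjmx_tens !tensmx_mul mulmx1 hPh hPP.
  exact/psd_conj/psd_1tensmx.
have hQW : PA *t (VB *m s *m adjmx VB) *m W = 0.
  by rewrite tensmx_mul hPV tens0mx.
rewrite id_decomp D_embed // ?isometry_tens //.
exact: psd_1tensmx.
Qed.

Lemma D_tens_compress_le (rho : 'M[C]_(dA * dB)) (s' : 'M[C]_dB') :
  psd rho -> psd s' ->
  (D (dA * dB)%N rho (1%:M *t (adjmx VB *m s' *m VB)) <=
   D (dA' * dB')%N (W *m rho *m adjmx W) (1%:M *t s'))%E.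
Proof.
move=> hrho hs'.
have := D_compress_le (isometry_tens hVA hVB) hrho (psd_1tensmx dA' hs').
by rewrite adjmx_tens !tensmx_mul mulmx1 hVA.
Qed.

End Isometries.
End DataProcessing.

(* T = tr(P_B s') |i0><i0|, written as a Kraus sum to make it visibly
   positive *)
Lemma density_compress_completion dB dB' (VB : 'M[C]_(dB', dB))
    (s' : 'M[C]_dB') (i0 : 'I_dB) :
  adjmx VB *m VB = 1%:M -> density s' ->
  exists T, psd T /\ density (adjmx VB *m s' *m VB + T).
Proof.
move=> hVB [hs' ht].
have [hPh hPP hPV hPs] := isometry_compl hVB.
set PB := 1%:M - VB *m adjmx VB in hPh hPP hPV hPs.
pose K (l : 'I_dB') : 'M[C]_(dB, dB') := delta_mx i0 l *m PB.
exists (\sum_l K l *m s' *m adjmx (K l)).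
have hT : psd (\sum_l K l *m s' *m adjmx (K l)).
  by apply: psd_sum => l _; apply: psd_conj.
split => //; split; first exact/psdD/hT/psd_conj_adj.
have hKK : \sum_l adjmx (K l) *m K l = PB.
  under eq_bigr => l _ do
    rewrite /K adjmxM adjmx_delta hPh mulmxA -(mulmxA PB) mul_delta_mx.
  rewrite -mulmx_suml -mulmx_sumr.
  have -> : \sum_(l < dB') (delta_mx l l : 'M[C]_dB') = 1%:M.
    apply/matrixP => a b; rewrite summxE [RHS]mxE (sum_ord_supp1 (i := a)).
      by rewrite mxE eqxx /= eq_sym.
    by move=> l hl; rewrite mxE eq_sym (negbTE hl).
  by rewrite mulmx1 hPP.
rewrite mxtraceD mxtrace_mulC mulmxA raddf_sum /=.
under eq_bigr => l _ do rewrite mxtrace_mulC mulmxA.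
by rewrite -raddf_sum /= -mulmx_suml hKK -mxtraceD -mulmxDl hPs mul1mx.
Qed.

Lemma density_conj n n' (V : 'M[C]_(n', n)) (X : 'M[C]_n) :
  adjmx V *m V = 1%:M -> density X -> density (V *m X *m adjmx V).
Proof.
move=> hV [hX tX]; split; first exact: psd_conj.
by rewrite mxtrace_mulC mulmxA hV mul1mx.
Qed.

Lemma density_dim_gt0 n (X : 'M[C]_n) : density X -> (0 < n)%N.
Proof.
case: n X => [|n] X // [_]; rewrite /mxtrace big_ord0 => /eqP.
by rewrite eq_sym oner_eq0.
Qed.

End ConditionalEntropyIsometry.

Theorem lemma8 (R : realType) (D : rel_ent R)
  (H : forall dA dB : nat, 'M[R[i]]_(dA * dB) -> \bar R)
  (Ha : prop_a D) (Hb : prop_b D) (HH : is_cond_entropy D H)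
  (dA dB dA' dB' : nat) (VA : 'M[R[i]]_(dA', dA)) (VB : 'M[R[i]]_(dB', dB))
  (hVA : is_isometry VA) (hVB : is_isometry VB)
  (rho : 'M[R[i]]_(dA * dB)) (hrho : density rho) :
  H dA dB rho = H dA' dB' ((VA *t VB) *m rho *m adjmx (VA *t VB)).
Proof.
have hpsd := hrho.1.
have hrho' := density_conj (isometry_tens hVA hVB) hrho.
case: HH => [H1 | H2].
  rewrite !H1 // /Hcond1 ptrA_conj //.
  by rewrite (D_tens_conj Ha Hb hVA hVB hpsd (psd_ptrA hpsd)).
have [[s [hs ->]] hmax] := H2 _ _ _ hrho.
have [[s' [hs' ->]] hmax'] := H2 _ _ _ hrho'.
apply/le_anti/andP; split.
  apply: le_trans (hmax' _ (density_conj hVB hs)).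
  by rewrite /Hcond_sigma (D_tens_conj Ha Hb hVA hVB hpsd hs.1).
have /andP [_ hdB] : (0 < dA)%N && (0 < dB)%N.
  by rewrite -muln_gt0; exact: density_dim_gt0 hrho.
have [T [hT hsig]] := density_compress_completion (Ordinal hdB) hVB hs'.
apply: le_trans (hmax _ hsig).
rewrite /Hcond_sigma leeN2 tensmxDr.
have hs'B := psd_1tensmx dA (psd_conj_adj VB hs'.1).
apply: le_trans (D_addr_le Ha Hb hpsd hs'B (psd_1tensmx dA hT)) _.
exact: (D_tens_compress_le Ha Hb hVA hVB hpsd hs'.1).
Qed.
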